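(* Let $p=(p_N)_{N\subseteq\mathbf{U}}$ be a random partition that is positive (i.e., $p_N(\pi)>0$ for all $N\subseteq\mathbf{U}$ and $\pi\in\Pi(N)$) and generates the potential for TU games (i.e., $\mathrm{E}_p(v)=\mathrm{Pot}(v)$ for every $N\subseteq\mathbf{U}$ and every TU game $v$ on $N$, viewed as a TUX game). A restriction operator $r$ is path independent, preserves null games, and satisfies $\mathrm{Pot}^r=\mathrm{E}_p$ (on all TUX games) if and only if $r=r^p$, where $r^p$ is the restriction operator defined by $$w^{r^p}_{-i}(S,\pi)=\frac{n}{n-s}\sum_{B\in\pi\cup\{\emptyset\}}\frac{p_N(\{S\}\cup\pi_{+i\leadsto B})}{p_{N\setminus\{i\}}(\{S\}\cup\pi)}\,w(S,\pi_{+i\leadsto B})$$ for all $N\subseteq\mathbf{U}$, $w\in\mathbb{W}(N)$, $i\in N$, $(S,\pi)\in\mathcal{E}(N\setminus\{i\})$.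
   Context: $\mathbf{U}$ is a finite set of players; cardinalities of sets $N,S,T,B$ are $n,s,t,b$. $\Pi(N)$ is the set of partitions of $N$ (with $\Pi(\emptyset)=\{\emptyset\}$). A random partition is a family $p=(p_N)_{N\subseteq\mathbf{U}}$ with $p_N$ a probability distribution on $\Pi(N)$. For $\pi\in\Pi(N\setminus\{i\})$ and $B\in\pi$, $\pi_{+i\leadsto B}=(\pi\setminus\{B\})\cup\{B\cup\{i\}\}$ and $\pi_{+i\leadsto\emptyset}=\pi\cup\{\{i\}\}$. A TU game on $N$ is $v:2^N\to\mathbb{R}$ with $v(\emptyset)=0$; its subgame $v_{-i}$ is its restriction to $2^{N\setminus\{i\}}$. The potential $\mathrm{Pot}$ for TU games is the unique map with $\mathrm{Pot}$ of the game on $\emptyset$ equal to $0$ and $\sum_{i\in N}[\mathrm{Pot}(v)-\mathrm{Pot}(v_{-i})]=v(N)$; explicitly $\mathrm{Pot}(v)=\sum_{\emptyset\neq S\subseteq N}\frac{(s-1)!(n-s)!}{n!}v(S)$. The embedded coalitions of $N$ are $\mathcal{E}(N)=\{(S,\pi):S\subseteq N,\ \pi\in\Pi(N\setminus S)\}$. A TUX game (partition function game) on $N$ is $w:\mathcal{E}(N)\to\mathbb{R}$ with $w(\emptyset,\pi)=0$ for all $\pi$; $\mathbb{W}(N)$ is the set of these. A TU game $v$ is identified with the TUX game $w(S,\pi)=v(S)$. The null game $\mathbf{0}^N$ is identically $0$. For a random partition $p$, $\mathrm{E}_p(w)=\sum_{\pi\in\Pi(N)}p_N(\pi)\sum_{S\in\pi}w(S,\pi\setminus\{S\})$.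 A restriction operator $r$ assigns to every $N\subseteq\mathbf{U}$, $w\in\mathbb{W}(N)$, $i\in N$ a game $w^r_{-i}\in\mathbb{W}(N\setminus\{i\})$ such that $w^r_{-i}(S,\pi)$ depends only on the values $w(S,\pi_{+i\leadsto B})$, $B\in\pi\cup\{\emptyset\}$ (i.e., if $w,w'$ agree on these, then $w^r_{-i}(S,\pi)=w'^r_{-i}(S,\pi)$). It is path independent if $(w^r_{-i})^r_{-j}=(w^r_{-j})^r_{-i}$ for all $w$ and distinct $i,j$ (so $w^r_{-T}$ is well defined for $T\subseteq N$); it preserves null games if $(\mathbf{0}^N)^r_{-i}=\mathbf{0}^{N\setminus\{i\}}$. For path independent $r$, the $r$-potential $\mathrm{Pot}^r$ is the unique map on TUX games with $\mathrm{Pot}^r(\mathbf{0}^\emptyset)=0$ and $\sum_{i\in N}[\mathrm{Pot}^r(w)-\mathrm{Pot}^r(w^r_{-i})]=w(N,\emptyset)$ for all $w\in\mathbb{W}(N)$; equivalently $\mathrm{Pot}^r(w)=\mathrm{Pot}(v^r_w)$ with $v^r_w(S)=w^r_{-(N\setminus S)}(S,\emptyset)$. *)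

(* Players: a finite type U; coalitions: {set U};
   partitions of N: P : {set {set U}} with [partition P of N] (finset's
   'partition': blocks nonempty, pairwise disjoint, covering N; so the only
   partition of set0 is set0). Games are represented as total functions whose
   values outside the relevant domain are irrelevant. *)
From mathcomp Require Import all_boot all_order all_algebra.
Set Implicit Arguments.
Unset Strict Implicit.
Unset Printing Implicit Defensive.
Import Order.TTheory GRing.Theory Num.Theory.
Local Open Scope ring_scope.

Section Games.
Variables (U : finType) (R : realFieldType).

Definition tuxgame := {set U} -> {set {set U}} -> R.
Definition tugame := {set U} -> R.

Definition random_partition (p : {set U} -> {set {set U}} -> R) : Prop :=
  forall N : {set U},
    (forall P : {set {set U}}, partition P N -> 0 <= p N P) /\
    \sum_(P : {set {set U}} | partition P N) p N P = 1.

Definition positive_rp (p : {set U} -> {set {set U}} -> R) : Prop :=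
  forall (N : {set U}) (P : {set {set U}}), partition P N -> 0 < p N P.

Definition embedded (N S : {set U}) (P : {set {set U}}) : bool :=
  (S \subset N) && partition P (N :\: S).

Definition is_tux (N : {set U}) (w : tuxgame) : Prop :=
  forall P : {set {set U}}, partition P N -> w set0 P = 0.

Definition is_tu (v : tugame) : Prop := v set0 = 0.

Definition tux_of_tu (v : tugame) : tuxgame := fun S _ => v S.

Definition null_game : tuxgame := fun _ _ => 0.

Definition Pot (N : {set U}) (v : tugame) : R :=
  \sum_(S : {set U} | (S \subset N) && (S != set0))
     (((#|S|.-1)`! * (#|N| - #|S|)`!)%:R / (#|N|`!)%:R) * v S.

Definition Ep (p : {set U} -> {set {set U}} -> R) (N : {set U}) (w : tuxgame) : R :=
  \sum_(P : {set {set U}} | partition P N) p N P * \sum_(S in P) w S (P :\ S).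

Definition generates_pot (p : {set U} -> {set {set U}} -> R) : Prop :=
  forall (N : {set U}) (v : tugame), is_tu v -> Ep p N (tux_of_tu v) = Pot N v.

Definition plus_to (P : {set {set U}}) (i : U) (B : {set U}) : {set {set U}} :=
  if B == set0 then P :|: [set [set i]]
  else (P :\ B) :|: [set B :|: [set i]].

(* restriction operators: r N w i is w^r_{-i} *)
Definition restr_op := {set U} -> tuxgame -> U -> tuxgame.

Definition is_restriction (r : restr_op) : Prop :=
  (forall (N : {set U}) (w : tuxgame) (i : U),
      i \in N -> is_tux N w -> is_tux (N :\ i) (r N w i)) /\
  (forall (N : {set U}) (w w' : tuxgame) (i : U) (S : {set U}) (P : {set {set U}}),
      i \in N -> is_tux N w -> is_tux N w' -> embedded (N :\ i) S P ->
      (forall B : {set U}, B \in P :|: [set set0] ->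
          w S (plus_to P i B) = w' S (plus_to P i B)) ->
      r N w i S P = r N w' i S P).

Definition path_independent (r : restr_op) : Prop :=
  forall (N : {set U}) (w : tuxgame) (i j : U),
    is_tux N w -> i \in N -> j \in N -> i != j ->
    forall (S : {set U}) (P : {set {set U}}), embedded (N :\ i :\ j) S P ->
      r (N :\ i) (r N w i) j S P = r (N :\ j) (r N w j) i S P.

Definition preserves_null (r : restr_op) : Prop :=
  forall (N : {set U}) (i : U), i \in N ->
    forall (S : {set U}) (P : {set {set U}}), embedded (N :\ i) S P ->
      r N null_game i S P = 0.

Fixpoint potr_aux (r : restr_op) (k : nat) (N : {set U}) (w : tuxgame) : R :=
  match k with
  | 0 => 0
  | k'.+1 => (w N set0 + \sum_(i in N) potr_aux r k' (N :\ i) (r N w i)) / (#|N|)%:R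
  end.

Definition Potr (r : restr_op) (N : {set U}) (w : tuxgame) : R :=
  potr_aux r #|N| N w.

Definition rp (p : {set U} -> {set {set U}} -> R) : restr_op :=
  fun N w i S P =>
    ((#|N|)%:R / (#|N| - #|S|)%:R) *
    \sum_(B in P :|: [set set0])
       (p N ([set S] :|: plus_to P i B) / p (N :\ i) ([set S] :|: P))
         * w S (plus_to P i B).

Definition restr_eq (r r' : restr_op) : Prop :=
  forall (N : {set U}) (w : tuxgame) (i : U), is_tux N w -> i \in N ->
    forall (S : {set U}) (P : {set {set U}}), embedded (N :\ i) S P ->
      r N w i S P = r' N w i S P.

End Games.

(* Grouping the partitions of N by the
   block of a given player, and using p_N({N}) = 1/n (the potential of the
   unanimity game of N), gives n E_p(w) = w(N, {}) + sum_i E_p(w^{r^p}_{-i}),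
   i.e. Pot^{r^p} = E_p. And w^{r^p}_{-i,-j}(S, pi) is a sum over the partitions
   of N \ S restricting to pi on N \ {i, j}, with a coefficient symmetric in i
   and j, so r^p is path independent. To compute w^r_{-i}(S, pi) for S <> {},
   replace w by its part on the fibre {(S, rho) : rho_{-i} = pi}, which locality
   allows. Every restriction of that game lives on the coalition S, and path
   independence (with r = r^p on smaller sets) makes all E_p(w^r_{-j}), j not in
   S, equal; so the recursion for Pot^r reads
   n E_p(w) = (n - s) p_{N\i}({S} u pi) w^r_{-i}(S, pi). The same identity holds
   for r^p, and positivity of p lets us cancel. *)

From mathcomp Require Import all_boot all_order all_algebra.
From mathcomp Require Import ring.
Import Order.TTheory GRing.Theory Num.Theory.
Local Open Scope ring_scope.
Set Implicit Arguments.
Unset Strict Implicit.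
Unset Printing Implicit Defensive.

Section Partitions.
Variable U : finType.
Implicit Types (P Q : {set {set U}}) (D M N S B T X Y : {set U}) (k : U).

Lemma partitionP P D : reflect [/\ set0 \notin P, {in P, forall X, X \subset D},
   {in D, forall x, exists2 X, X \in P & x \in X} &
   {in P &, forall X Y x, x \in X -> x \in Y -> X = Y}] (partition P D).
Proof.
apply: (iffP and3P) => [[/eqP cP tP s0]|[s0 sub cov uq]].
  split => //.
  - by move=> X XP; rewrite -cP; apply: bigcup_sup.
  - by move=> x; rewrite -cP => /bigcupP[X XP xX]; exists X.
  move=> X Y XP YP x xX xY; apply/eqP; apply/negPn/negP => nXY.
  have := (elimT trivIsetP tP) X Y XP YP nXY.
  by move/disjointFr => /(_ _ xX); rewrite xY.
split => //.
  apply/eqP/setP => x; apply/bigcupP/idP => [[X XP xX]|xD].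
    exact: (subsetP (sub X XP)).
  by have [X XP xX] := cov x xD; exists X.
apply/trivIsetP => X Y XP YP nXY; rewrite disjoint_subset; apply/subsetP => x xX.
rewrite inE; apply/negP => xY.
by move: nXY; rewrite (uq X Y XP YP x xX xY) eqxx.
Qed.

Lemma partition_set1 N : N != set0 -> partition [set N] N.
Proof.
move=> Nn0; have := @partitionU1 _ set0 set0 N.
by rewrite !setU0 partition_set0 -setI_eq0 setI0 eqxx; apply.
Qed.

Lemma partition_eq_set1 P N : partition P N -> N \in P -> P = [set N].
Proof.
move=> pP NP; have /partitionP[s0 sub _ uq] := pP.
apply/setP => X; rewrite inE; apply/idP/eqP => [XP|->//].
have /set0Pn[x xX] : X != set0 by apply: contraNneq s0 => <-.
exact: uq XP NP x xX (subsetP (sub X XP) x xX).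
Qed.

Lemma partition_add_block P D S : partition P (D :\: S) -> S != set0 ->
  S \subset D -> partition (S |: P) D.
Proof.
move=> pP Sn0 SD.
have -> : D = S :|: (D :\: S) by rewrite -{1}(setIidPr SD) setID.
by apply: partitionU1; rewrite // -setI_eq0 setDE setICA setICr setI0.
Qed.

Lemma partition_notin P D k X : partition P D -> k \notin D -> X \in P -> k \notin X.
Proof. by move=> pP kD XP; apply: contra kD; apply: (subsetP (partitionS pP XP)). Qed.

Lemma partition_plus_to P D k B : partition P D -> k \notin D ->
  B \in P :|: [set set0] -> partition (plus_to P k B) (k |: D).
Proof.
move=> pP kD; rewrite /plus_to; case: eqP => [_ _|/eqP Bn0].
  rewrite setUC; apply: partitionU1 => //; last by rewrite disjoints1.
  by apply/set0Pn; exists k; rewrite inE.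
rewrite !inE (negbTE Bn0) orbF => BP.
have Bkn0 : B :|: [set k] != set0 by apply/set0Pn; exists k; rewrite !inE eqxx orbT.
have := partitionU1 (partitionD1 pP BP) Bkn0.
have -> : (B :|: [set k]) :|: (D :\: B) = k |: D.
  by rewrite setUAC -{1}(setIidPr (partitionS pP BP)) setID setUC.
have -> : (P :\ B) :|: [set B :|: [set k]] = (B :|: [set k]) |: (P :\ B) by apply: setUC.
apply; rewrite disjoint_subset; apply/subsetP => x.
by rewrite !inE => /orP[->|/eqP->] //; rewrite (negbTE kD) andbF.
Qed.

Lemma setD1_id k X : k \notin X -> X :\ k = X.
Proof. by move=> kX; apply/setDidPl; rewrite disjoint_sym disjoints1. Qed.

Lemma setU1rK k B : k \notin B -> (B :|: [set k]) :\ k = B.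
Proof. by move=> kB; rewrite setUC setU1K. Qed.

Lemma setD1C N k k' : N :\ k :\ k' = N :\ k' :\ k.
Proof. by rewrite !setDDl setUC. Qed.

Definition restrict_part P k : {set {set U}} := [set X :\ k | X in P] :\ set0.

Lemma partition_restrict P D k : partition P D -> partition (restrict_part P k) (D :\ k).
Proof.
move=> pP; have /partitionP[s0 sub cov uq] := pP.
apply/partitionP; split.
- by rewrite !inE eqxx.
- move=> X; rewrite !inE => /andP[_ /imsetP[Y YP ->]]; exact: setSD (sub Y YP).
- move=> x; rewrite inE => /andP[xk xD]; have [Y YP xY] := cov x xD.
  exists (Y :\ k); last by rewrite inE xk.
  rewrite !inE; apply/andP; split; last by apply/imsetP; exists Y.
  by apply/set0Pn; exists x; rewrite inE xk.
- move=> X Y; rewrite !inE => /andP[_ /imsetP[X' X'P ->]] /andP[_ /imsetP[Y' Y'P ->]] x.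
  by rewrite !inE => /andP[_ xX] /andP[_ xY]; rewrite (uq X' Y' X'P Y'P x xX xY).
Qed.

Lemma restrict_plus_to P D k B : partition P D -> k \notin D ->
  B \in P :|: [set set0] -> restrict_part (plus_to P k B) k = P.
Proof.
move=> pP kD BP; have s0 : set0 \notin P by rewrite (partition0 pP).
have kX X : X \in P -> k \notin X by apply: partition_notin pP kD.
apply/setP => X; rewrite /restrict_part /plus_to !inE.
case: (B =P set0) => [B0|/eqP Bn0].
  apply/andP/idP => [[Xn0 /imsetP[Y]]|XP].
    rewrite !inE => /orP[YP ->|/eqP-> XE]; first by rewrite setD1_id ?kX.
    by move: Xn0; rewrite XE setDv eqxx.
  split; first by apply: contraNneq s0 => <-.
  by apply/imsetP; exists X; rewrite ?inE ?XP ?setD1_id ?kX.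
have BP' : B \in P by move: BP; rewrite !inE (negbTE Bn0) orbF.
apply/andP/idP => [[Xn0 /imsetP[Y]]|XP].
  rewrite !inE => /orP[/andP[_ YP] ->|/eqP-> ->]; first by rewrite setD1_id ?kX.
  by rewrite setU1rK ?kX.
split; first by apply: contraNneq s0 => <-.
apply/imsetP; case: (X =P B) => [->|/eqP XnB].
  by exists (B :|: [set k]); rewrite ?inE ?eqxx ?orbT // setU1rK ?kX.
by exists X; rewrite ?inE ?XP ?XnB ?setD1_id ?kX.
Qed.

Lemma pblock_plus_to P D k B : partition P D -> k \notin D ->
  B \in P :|: [set set0] -> pblock (plus_to P k B) k :\ k = B.
Proof.
move=> pP kD BP; have tP := partition_trivIset (partition_plus_to pP kD BP).
move: tP; rewrite /plus_to; case: (B =P set0) => [-> tP|/eqP Bn0 tP].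
  by rewrite (@def_pblock _ _ [set k]) ?setDv ?inE ?eqxx ?orbT.
rewrite (@def_pblock _ _ (B :|: [set k])) ?inE ?eqxx ?orbT //.
move: BP; rewrite !inE (negbTE Bn0) orbF => BP.
by rewrite setU1rK ?(partition_notin pP kD BP).
Qed.

Lemma plus_to_restrict P D k : partition P D -> k \in D ->
  plus_to (restrict_part P k) k (pblock P k :\ k) = P.
Proof.
move=> pP kD; have /partitionP[s0 sub cov uq] := pP.
have cP := cover_partition pP.
have CP : pblock P k \in P by apply: pblock_mem; rewrite cP.
have kC : k \in pblock P k by rewrite mem_pblock cP.
set C := pblock P k in CP kC *.
have kY Y : Y \in P -> Y != C -> k \notin Y.
  by move=> YP; apply: contra => kY; rewrite (uq Y C YP CP k kY kC).
rewrite /plus_to /restrict_part; case: eqP => [B0|/eqP Bn0].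
  have Ck : C = [set k].
    apply/setP => x; rewrite inE; case: (x =P k) => [->//|/eqP xk].
    by apply/negbTE; apply: contraNN xk => xC; move/setP: B0 => /(_ x);
      rewrite !inE xC andbT => /negbT; rewrite negbK.
  apply/setP => X; rewrite !inE; apply/idP/idP.
    case/orP => [/andP[Xn0 /imsetP[Y YP XE]]|/eqP->]; last by rewrite -Ck.
    case: (Y =P C) => [YC|/eqP YnC]; first by move: Xn0; rewrite XE YC Ck setDv eqxx.
    by rewrite XE setD1_id ?kY.
  move=> XP; case: (X =P C) => [->|/eqP XnC]; first by rewrite Ck eqxx orbT.
  apply/orP; left; apply/andP; split; first by apply: contraNneq s0 => <-.
  by apply/imsetP; exists X; rewrite ?setD1_id ?kY.
have BC : (C :\ k) :|: [set k] = C by rewrite setUC setD1K.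
apply/setP => X; rewrite !inE BC; apply/idP/idP.
  case/orP => [/andP[XnB /andP[Xn0 /imsetP[Y YP XE]]]|/eqP->//].
  case: (Y =P C) => [YC|/eqP YnC]; first by move: XnB; rewrite XE YC eqxx.
  by rewrite XE setD1_id ?kY.
move=> XP; case: (X =P C) => [->|/eqP XnC]; first by rewrite ?eqxx orbT.
apply/orP; left; apply/andP; split.
  apply/eqP => XB; move/set0Pn: Bn0 => [x]; rewrite -XB => xX.
  have xC : x \in C by move: xX; rewrite XB inE => /andP[].
  by move: XnC; rewrite (uq X C XP CP x xX xC) eqxx.
apply/andP; split; first by apply: contraNneq s0 => <-.
by apply/imsetP; exists X; rewrite ?setD1_id ?kY.
Qed.

Lemma pblock_restrict_mem P D k : partition P D -> k \in D ->
  pblock P k :\ k \in restrict_part P k :|: [set set0].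
Proof.
move=> pP kD; rewrite !inE; case: eqP => //= /eqP Bn0; rewrite orbF.
by apply/imsetP; exists (pblock P k); rewrite // pblock_mem ?(cover_partition pP).
Qed.

Lemma big_partition_plus_to (V : nmodType) N k (G : {set {set U}} -> V) : k \in N ->
  \sum_(P | partition P N) G P =
  \sum_(P | partition P (N :\ k)) \sum_(B in P :|: [set set0]) G (plus_to P k B).
Proof.
move=> kN; rewrite pair_big_dep.
rewrite (reindex_onto (fun x => plus_to x.1 k x.2)
  (fun P => (restrict_part P k, pblock P k :\ k))) /=;
  last by move=> P pP; apply: plus_to_restrict pP kN.
apply: eq_bigl => -[P B] /=.
have kD : k \notin N :\ k by rewrite !inE eqxx.
apply/idP/idP.
  case/andP; move: (plus_to P k B) => Q pQ /eqP[<- <-].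
  by rewrite (partition_restrict _ pQ) (pblock_restrict_mem pQ kN).
case/andP => pP BP.
have := partition_plus_to pP kD BP; rewrite setD1K // => ->.
by rewrite (restrict_plus_to pP kD BP) (pblock_plus_to pP kD BP) eqxx.
Qed.

Lemma restrict_partC P k k' :
  restrict_part (restrict_part P k) k' = restrict_part (restrict_part P k') k.
Proof.
suff rr l l' : restrict_part (restrict_part P l) l' = [set X :\ l :\ l' | X in P] :\ set0.
  by rewrite !rr; congr (_ :\ _); apply: eq_imset => X; rewrite setD1C.
apply/setP => Y; rewrite /restrict_part !inE; case: (Y =P set0) => //= /eqP Yn0.
apply/imsetP/imsetP => [[Z]|[X XP eY]].
  by rewrite !inE => /andP[_ /imsetP[X XP ->]] ->; exists X.
exists (X :\ l) => //; rewrite !inE; apply/andP; split; last by apply/imsetP; exists X.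
by apply: contraNneq Yn0 => eX; rewrite eY eX set0D.
Qed.

Lemma setU1_plus_to P k B T : T \in P -> B \in (P :\ T) :|: [set set0] ->
  T |: plus_to (P :\ T) k B = plus_to P k B.
Proof.
move=> TP; rewrite /plus_to; case: (B =P set0) => [_ _|/eqP Bn0].
  by rewrite setUA setD1K.
rewrite !inE (negbTE Bn0) orbF => /andP[BnT BP].
apply/setP => X; rewrite !inE; case: (X =P T) => [->|_] //=.
by rewrite eq_sym BnT TP.
Qed.

Lemma plus_to_setD1 P D k B T : partition P D -> k \notin D ->
  T \in P -> T != B -> plus_to P k B :\ T = plus_to (P :\ T) k B.
Proof.
move=> pP kD TP TnB; have kT := partition_notin pP kD TP.
rewrite /plus_to; case: (B =P set0) => [_|_]; apply/setP => X; rewrite !inE;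
  case: (X =P T) => [->|_] //=.
  by apply/esym/negbTE; apply/eqP => /setP/(_ k); rewrite !inE eqxx (negbTE kT).
rewrite andbF; apply/esym/negbTE; apply/eqP => /setP/(_ k).
by rewrite !inE eqxx orbT (negbTE kT).
Qed.

Lemma mem_plus_to_notin P D k B T : partition P D -> k \notin D ->
  B \in P :|: [set set0] -> (T \in plus_to P k B) && (k \notin T) = (T \in P :\ B).
Proof.
move=> pP kD BP; have kX X : X \in P -> k \notin X by apply: partition_notin pP kD.
have s0 : set0 \notin P by rewrite (partition0 pP).
rewrite /plus_to; case: (B =P set0) => [->|/eqP Bn0]; rewrite !inE.
  case: (T =P [set k]) => [->|_]; first by rewrite !inE eqxx orbT /=;
    apply/esym/negbTE; rewrite negb_and; apply/orP; right; apply/negP => /kX; rewrite inE eqxx.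
  rewrite orbF; case TP: (T \in P); last by rewrite !andbF.
  by rewrite kX //= andbT; apply/esym/eqP => T0; move: s0; rewrite -T0 TP.
case: (T =P B :|: [set k]) => [->|_]; first by rewrite !inE eqxx !orbT /=;
  apply/esym/negbTE; rewrite negb_and; apply/orP; right; apply/negP => /kX;
  rewrite !inE eqxx orbT.
by rewrite orbF; case TP: (T \in P); rewrite ?andbF // andbT kX // ?andbT.
Qed.

Lemma embedded_block P N T : partition P N -> T \in P -> embedded N T (P :\ T).
Proof. by move=> pP TP; rewrite /embedded (partitionS pP TP) partitionD1. Qed.

Lemma embedded_plus_to M S P k B : embedded (M :\ k) S P -> k \in M ->
  B \in P :|: [set set0] -> embedded M S (plus_to P k B).
Proof.
case/andP => SM pP kM BP.
have kS : k \notin S by apply/negP => /(subsetP SM); rewrite !inE eqxx.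
have kD : k \notin (M :\ k) :\: S by rewrite !inE eqxx /= andbF.
rewrite /embedded (subset_trans SM (subsetDl _ _)) /=.
have -> : M :\: S = k |: ((M :\ k) :\: S).
  by apply/setP => x; rewrite !inE; case: (x =P k) => [->|] //=; rewrite kM (negbTE kS).
exact: partition_plus_to.
Qed.

Lemma big_plus_to2 (V : nmodType) M k k' P (H : {set {set U}} -> V) :
  k \in M -> k' \in M -> k != k' -> partition P (M :\ k :\ k') ->
  \sum_(B' in P :|: [set set0]) \sum_(B in plus_to P k' B' :|: [set set0])
      H (plus_to (plus_to P k' B') k B)
  = \sum_(Q | partition Q M)
      (if restrict_part (restrict_part Q k) k' == P then H Q else 0).
Proof.
move=> kM k'M kk' pP.
have k'Mk : k' \in M :\ k by rewrite !inE eq_sym kk'.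
have kD : k \notin M :\ k by rewrite !inE eqxx.
have k'D : k' \notin M :\ k :\ k' by rewrite !inE eqxx.
rewrite (big_partition_plus_to _ kM).
transitivity (\sum_(Q | partition Q (M :\ k))
   (if restrict_part Q k' == P then \sum_(B in Q :|: [set set0]) H (plus_to Q k B)
    else 0)); last first.
  apply: eq_bigr => Q pQ; case: eqP => [QP|QnP].
    by apply: eq_bigr => B BQ; rewrite (restrict_plus_to pQ kD BQ) QP eqxx.
  by apply/esym/big1 => B BQ; rewrite (restrict_plus_to pQ kD BQ); case: eqP.
rewrite (big_partition_plus_to _ k'Mk).
transitivity (\sum_(Q | partition Q (M :\ k :\ k')) \sum_(B' in Q :|: [set set0])
   (if Q == P then \sum_(B in plus_to Q k' B' :|: [set set0])
                     H (plus_to (plus_to Q k' B') k B) else 0)); last first.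
  apply: eq_bigr => Q pQ; apply: eq_bigr => B' B'Q.
  by rewrite (restrict_plus_to pQ k'D B'Q).
rewrite [RHS](bigD1 P) //= [X in _ = _ + X]big1 ?addr0; last first.
  by move=> Q /andP[_ QnP]; apply: big1 => B' _; rewrite (negbTE QnP).
by apply: eq_bigr => B' _; rewrite eqxx.
Qed.

End Partitions.

Lemma natr_subn_neq0 (R : numDomainType) m n : (m < n)%N -> (n - m)%:R != 0 :> R.
Proof. by move=> mn; rewrite pnatr_eq0 subn_eq0 -ltnNge. Qed.

Lemma eq_cardsD1 (U : finType) (M : {set U}) k k' :
  k \in M -> k' \in M -> #|M :\ k| = #|M :\ k'|.
Proof.
move=> kM k'M; have := cardsD1 k M; have := cardsD1 k' M.
by rewrite kM k'M /= => -> /eqP; rewrite eqSS => /eqP.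
Qed.

Lemma card_lt_subsetD1 (U : finType) (N S : {set U}) k :
  k \in N -> S \subset N :\ k -> (#|S| < #|N|)%N.
Proof.
move=> kN SN; apply: (leq_ltn_trans (subset_leq_card SN)).
by rewrite [X in (_ < X)%N](cardsD1 k) kN.
Qed.

Lemma card_setD1_lt (U : finType) (N : {set U}) n j :
  (#|N| <= n)%N -> j \in N -> (#|N :\ j| < n)%N.
Proof. by move=> leNn jN; apply: leq_trans leNn; rewrite [X in (_ < X)%N](cardsD1 j) jN. Qed.

Section RandomPartitionRestriction.
Variables (U : finType) (R : realFieldType) (p : {set U} -> {set {set U}} -> R).
Implicit Types (P : {set {set U}}) (N M S T : {set U}) (u w : tuxgame U R).

Lemma eq_Ep N u w : (forall S P, embedded N S P -> u S P = w S P) -> Ep p N u = Ep p N w.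
Proof.
move=> uw; apply: eq_bigr => P pP; congr (_ * _).
by apply: eq_bigr => S SP; apply/uw/embedded_block.
Qed.

Lemma rp_local M u w k S P :
  (forall B, B \in P :|: [set set0] -> u S (plus_to P k B) = w S (plus_to P k B)) ->
  rp p M u k S P = rp p M w k S P.
Proof. by move=> uw; congr (_ * _); apply: eq_bigr => B /uw ->. Qed.

Lemma rp_vanishes M u k S P :
  (forall B, B \in P :|: [set set0] -> u S (plus_to P k B) = 0) -> rp p M u k S P = 0.
Proof. by move=> u0; rewrite /rp big1 ?mulr0 // => B /u0 ->; rewrite mulr0. Qed.

Lemma rp_is_tux N u k : is_tux N u -> k \in N -> is_tux (N :\ k) (rp p N u k).
Proof.
move=> tu kN P pP; apply: rp_vanishes => B BP.
have kD : k \notin N :\ k by rewrite !inE eqxx.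
by apply: tu; rewrite -(setD1K kN); apply: partition_plus_to.
Qed.

Lemma big_partition_full_block N (g : {set {set U}} -> {set U} -> R) : N != set0 ->
  \sum_(P | partition P N) \sum_(T in P) (if T == N then g P T else 0) = g [set N] N.
Proof.
move=> Nn0; rewrite (bigD1 [set N]) /= ?partition_set1 //.
rewrite [X in _ + X]big1 ?addr0; last first.
  move=> P /andP[pP PnN]; apply: big1 => T TP; case: eqP => // TN; subst T.
  by rewrite (partition_eq_set1 pP TP) eqxx in PnN.
rewrite (bigD1 N) ?inE //= eqxx big1 ?addr0 // => T /andP[_ TnN].
by rewrite (negbTE TnN).
Qed.

Hypothesis p_pos : positive_rp p.
Hypothesis p_set1 : forall N, N != set0 -> p N [set N] = #|N|%:R^-1.

Lemma p_neq0 N P : partition P N -> p N P != 0.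
Proof. by move=> pP; apply/lt0r_neq0/p_pos. Qed.

Lemma Ep_rp N u k : k \in N ->
  Ep p (N :\ k) (rp p N u k) =
  \sum_(P | partition P N) \sum_(T in P | k \notin T)
     (#|N|%:R / (#|N| - #|T|)%:R * p N P * u T (P :\ T)).
Proof.
move=> kN; rewrite [RHS](big_partition_plus_to _ kN) /Ep; apply: eq_bigr => Q pQ.
have kD : k \notin N :\ k by rewrite !inE eqxx.
have s0 : set0 \notin Q by rewrite (partition0 pQ).
transitivity (\sum_(B in Q :|: [set set0]) \sum_(T in Q :\ B)
   (#|N|%:R / (#|N| - #|T|)%:R * p N (plus_to Q k B) * u T (plus_to (Q :\ T) k B)));
  last first.
  apply: eq_bigr => B BQ; apply/esym.
  rewrite (eq_bigl (fun T => T \in Q :\ B)); last first.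
    by move=> T; rewrite (mem_plus_to_notin _ pQ kD BQ).
  apply: eq_bigr => T; rewrite !inE => /andP[TnB TQ].
  by rewrite (plus_to_setD1 pQ kD TQ TnB).
rewrite big_distrr /=.
transitivity (\sum_(S in Q) \sum_(B in (Q :\ S) :|: [set set0])
   (#|N|%:R / (#|N| - #|S|)%:R * p N (plus_to Q k B) * u S (plus_to (Q :\ S) k B))).
  apply: eq_bigr => S SQ; rewrite /rp setD1K // big_distrr /= big_distrr /=.
  apply: eq_bigr => B BQ; rewrite (setU1_plus_to _ SQ BQ).
  have := natr_subn_neq0 R (card_lt_subsetD1 kN (partitionS pQ SQ)).
  by have := p_neq0 pQ; move: (p (N :\ k) Q) => q qn0 hn; field; rewrite qn0 hn.
rewrite (exchange_big_dep (fun B => B \in Q :|: [set set0])) /=; last first.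
  by move=> S B SQ; rewrite !inE => /orP[/andP[_ ->]|->]; rewrite ?orbT.
apply: eq_big => [B|B BQ] //; apply: eq_bigl => T; rewrite !inE.
case: (B =P set0) => [->|/eqP Bn0] /=.
  rewrite orbT andbT; case TQ: (T \in Q); rewrite ?andbF // andbT.
  by apply/esym/eqP => T0; move: s0; rewrite -T0 TQ.
by move: BQ; rewrite !inE (negbTE Bn0) orbF => BQ; rewrite BQ orbF andbT eq_sym andbC.
Qed.

Lemma Ep_rp_recursion N u : N != set0 ->
  #|N|%:R * Ep p N u = u N set0 + \sum_(k in N) Ep p (N :\ k) (rp p N u k).
Proof.
move=> Nn0; under eq_bigr => k kN do rewrite (Ep_rp u kN).
rewrite exchange_big /=.
set G := fun P T => #|N|%:R * p N P * u T (P :\ T).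
transitivity (\sum_(P | partition P N) \sum_(T in P) G P T).
  rewrite /Ep big_distrr /=; apply: eq_bigr => P _; rewrite big_distrr /=.
  by rewrite big_distrr /=; apply: eq_bigr => T _; rewrite /G mulrA.
transitivity (\sum_(P | partition P N) \sum_(T in P) (if T == N then G P T else 0) +
   \sum_(P | partition P N) \sum_(T in P) (if T == N then 0 else G P T)).
  rewrite -big_split /=; apply: eq_bigr => P _; rewrite -big_split /=.
  by apply: eq_bigr => T _; case: eqP; rewrite ?addr0 ?add0r.
rewrite big_partition_full_block // /G setDv p_set1 // mulfV ?mul1r ?pnatr_eq0 ?cards_eq0 //.
congr (_ + _); apply: eq_bigr => P pP.
rewrite (exchange_big_dep (fun T => T \in P)) /=; last by move=> k T _ /andP[].
apply: eq_bigr => T TP.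
rewrite (eq_bigl (fun k => k \in N :\: T)); last by move=> k; rewrite !inE TP /= andbC.
have TN := partitionS pP TP.
rewrite sumr_const cardsD (setIidPr TN); case: (T =P N) => [->|/eqP TnN].
  by rewrite subnn mulr0n.
have lt : (#|T| < #|N|)%N by apply: proper_card; rewrite properEneq TnN.
have := natr_subn_neq0 R lt; move: (_ - _)%N => m hm; rewrite -[RHS]mulr_natl.
by field.
Qed.

Lemma rp_rpE N u k k' S P :
  k \in N -> k' \in N -> k != k' -> S != set0 -> embedded (N :\ k :\ k') S P ->
  rp p (N :\ k) (rp p N u k) k' S P =
  (#|N :\ k|%:R / (#|N :\ k| - #|S|)%:R) * (#|N|%:R / (#|N| - #|S|)%:R)
   / p (N :\ k :\ k') (S |: P) *
  \sum_(Q | partition Q (N :\: S))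
     (if restrict_part (restrict_part Q k) k' == P then p N (S |: Q) * u S Q else 0).
Proof.
move=> kN k'N kk' Sn0 /andP[SN pP].
have kS : k \notin S by apply/negP => /(subsetP SN); rewrite !inE eqxx andbF.
have k'S : k' \notin S by apply/negP => /(subsetP SN); rewrite !inE eqxx.
have kM : k \in N :\: S by rewrite inE kS.
have k'M : k' \in N :\: S by rewrite inE k'S.
have pP' : partition P ((N :\: S) :\ k :\ k').
  suff -> : (N :\: S) :\ k :\ k' = (N :\ k :\ k') :\: S by [].
  by apply/setP => x; rewrite !inE; case: (x \in S) => /=; rewrite ?andbF.
rewrite -(big_plus_to2 (fun Q => p N (S |: Q) * u S Q) kM k'M kk' pP').
rewrite /rp big_distrr [RHS]big_distrr /=; apply: eq_bigr => B' B'P.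
have k'D : k' \notin (N :\ k :\ k') :\: S by rewrite !inE eqxx /= andbF.
have pQ := partition_plus_to pP k'D B'P.
have eQ : k' |: ((N :\ k :\ k') :\: S) = (N :\ k) :\: S.
  apply/setP => x; rewrite !inE; case: (x =P k') => [->|] //=.
  by rewrite k'S /= k'N eq_sym kk'.
rewrite eQ in pQ.
have SNk : S \subset N :\ k by apply: subset_trans SN (subsetDl _ _).
have a0 := p_neq0 (partition_add_block pQ Sn0 SNk).
have q0 := p_neq0 (partition_add_block pP Sn0 SN).
rewrite !big_distrr /=; apply: eq_bigr => B BP.
move: a0 q0; move: (p (N :\ k) _) (p (N :\ k :\ k') _) => a q a0 q0.
have h1 : (#|N :\ k| - #|S|)%:R != 0 :> R.
  by apply/natr_subn_neq0/(card_lt_subsetD1 _ SN); rewrite !inE eq_sym kk'.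
have h2 : (#|N| - #|S|)%:R != 0 :> R by apply/natr_subn_neq0/(card_lt_subsetD1 kN SNk).
by field; rewrite a0 q0 h1 h2.
Qed.

Lemma rp_path_independent : path_independent (rp p).
Proof.
move=> N u k k' tu kN k'N kk' S P eP.
have eP' : embedded (N :\ k' :\ k) S P by rewrite setD1C.
have k'Nk : k' \in N :\ k by rewrite !inE eq_sym kk'.
have kNk' : k \in N :\ k' by rewrite !inE kk'.
have [S0|Sn0] := eqVneq S set0.
  subst S; move: eP eP'; rewrite /embedded !setD0 => /andP[_ pP] /andP[_ pP'].
  by rewrite (rp_is_tux (rp_is_tux tu kN) k'Nk pP) (rp_is_tux (rp_is_tux tu k'N) kNk' pP').
rewrite (rp_rpE u kN k'N kk' Sn0 eP) (rp_rpE u k'N kN _ Sn0 eP'); last by rewrite eq_sym.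
by rewrite (eq_cardsD1 kN k'N) setD1C; congr (_ * _); apply: eq_bigr => Q _; rewrite restrict_partC.
Qed.

End RandomPartitionRestriction.

Section Concentrated.
Variables (U : finType) (R : realFieldType) (p : {set U} -> {set {set U}} -> R).
Implicit Types (P : {set {set U}}) (M N S T : {set U}) (u w : tuxgame U R).

Definition concentrated M S u :=
  forall S' P', embedded M S' P' -> S' != S -> u S' P' = 0.

Lemma concentrated_is_tux M S u : S != set0 -> concentrated M S u -> is_tux M u.
Proof.
move=> Sn0 cu P pP; apply: cu; last by rewrite eq_sym.
by rewrite /embedded sub0set setD0.
Qed.

Lemma rp_concentrated M S u k :
  concentrated M S u -> k \in M -> concentrated (M :\ k) S (rp p M u k).
Proof.
move=> cu kM S' P' eP S'nS; apply: rp_vanishes => B BP.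
by apply: cu S'nS; apply: embedded_plus_to.
Qed.

Lemma Ep_concentrated_out M S u : concentrated M S u -> ~~ (S \subset M) -> Ep p M u = 0.
Proof.
move=> cu SM; apply: big1 => P pP; rewrite big1 ?mulr0 // => T TP.
apply: cu (embedded_block pP TP) _.
by apply: contraNneq SM => <-; apply: partitionS pP TP.
Qed.

Lemma sum_Ep_concentrated M S (f : U -> tuxgame U R) :
  (forall k, k \in M -> concentrated (M :\ k) S (f k)) ->
  \sum_(k in M) Ep p (M :\ k) (f k) = \sum_(k in M :\: S) Ep p (M :\ k) (f k).
Proof.
move=> cf; rewrite (bigID (fun k => k \in S)) /= big1 ?add0r.
  by apply: eq_bigl => k; rewrite !inE andbC.
move=> k /andP[kM kS]; apply: Ep_concentrated_out (cf k kM) _.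
by apply/negP => /subsetP/(_ k kS); rewrite !inE eqxx.
Qed.

Lemma Ep_point M S P u : embedded M S P -> S != set0 ->
  (forall S' P', embedded M S' P' -> (S' != S) || (P' != P) -> u S' P' = 0) ->
  Ep p M u = p M (S |: P) * u S P.
Proof.
move=> /andP[SM pP] Sn0 u0.
have SP : S \notin P.
  apply/negP => /(partitionS pP) /subsetP SS; move/set0Pn: Sn0 => [x xS].
  by have := SS x xS; rewrite inE xS.
rewrite /Ep (bigD1 (S |: P)) /= ?partition_add_block //.
rewrite [X in _ + X]big1 ?addr0; last first.
  move=> Q /andP[pQ QnSP]; rewrite big1 ?mulr0 // => T TQ.
  apply: u0 (embedded_block pQ TQ) _; rewrite -negb_and.
  by apply: contra QnSP => /andP[/eqP TS /eqP QT]; rewrite -QT -TS setD1K.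
congr (_ * _); rewrite (bigD1 S) ?setU11 //= setU1K // big1 ?addr0 // => T /andP[TQ TnS].
by apply: u0; [apply: embedded_block TQ; apply: partition_add_block | rewrite TnS].
Qed.

Hypothesis p_pos : positive_rp p.
Hypothesis p_set1 : forall N, N != set0 -> p N [set N] = #|N|%:R^-1.

Lemma Ep_concentrated_reduce M S u k : concentrated M S u -> k \in M :\: S ->
  (forall l, l \in M :\: S -> Ep p (M :\ l) (rp p M u l) = Ep p (M :\ k) (rp p M u k)) ->
  #|M|%:R * Ep p M u = #|M :\: S|%:R * Ep p (M :\ k) (rp p M u k).
Proof.
move=> cu kMS same; have /setDP[kM kS] := kMS.
have Mn0 : M != set0 by apply/set0Pn; exists k.
rewrite (Ep_rp_recursion p_pos p_set1) //.
have -> : u M set0 = 0.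
  apply: cu; first by rewrite /embedded subxx setDv partition_set0 eqxx.
  by apply: contraNneq kS => <-.
rewrite add0r (sum_Ep_concentrated (fun l lM => rp_concentrated cu lM)).
by rewrite (eq_bigr _ same) sumr_const mulr_natl.
Qed.

Lemma Ep_concentrated_eq M k k' S a b :
  k \in M -> k' \in M -> k != k' -> S != set0 -> S \subset M :\ k :\ k' ->
  concentrated (M :\ k) S a -> concentrated (M :\ k') S b ->
  (forall S' P', embedded (M :\ k :\ k') S' P' ->
      rp p (M :\ k) a k' S' P' = rp p (M :\ k') b k S' P') ->
  Ep p (M :\ k) a = Ep p (M :\ k') b.
Proof.
have [n] := ubnP #|M|; elim: n => // n IH in M k k' a b *; rewrite ltnS => leMn.
move=> kM k'M kk' Sn0 SM ca cb ab.
have reduce j j' c : j \in M -> j' \in M :\ j -> j' \notin S -> S \subset M :\ j ->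
    concentrated (M :\ j) S c ->
    #|M :\ j|%:R * Ep p (M :\ j) c =
    #|M :\ j :\: S|%:R * Ep p (M :\ j :\ j') (rp p (M :\ j) c j').
  move=> jM j'Mj j'S SMj cc; apply: Ep_concentrated_reduce => //; first by rewrite inE j'S.
  move=> l /setDP[lMj lS]; have [->//|lj'] := eqVneq l j'.
  apply: IH => //.
  - exact: card_setD1_lt.
  - apply/subsetP => x xS; have := subsetP SMj x xS; rewrite !inE => /andP[-> ->].
    rewrite !andbT; apply/andP.
    by split; [apply: contraNneq j'S | apply: contraNneq lS] => <-.
  - exact: rp_concentrated.
  - exact: rp_concentrated.
  - move=> S' P' eP; apply: rp_path_independent => //.
    exact: concentrated_is_tux cc.
have SMk : S \subset M :\ k by apply: subset_trans SM (subsetDl _ _).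
have SMk' : S \subset M :\ k' by rewrite setD1C in SM; apply: subset_trans SM (subsetDl _ _).
have kS : k \notin S by apply/negP => /(subsetP SM); rewrite !inE eqxx andbF.
have k'S : k' \notin S by apply/negP => /(subsetP SM); rewrite !inE eqxx.
have k'Mk : k' \in M :\ k by rewrite !inE eq_sym kk'.
have kMk' : k \in M :\ k' by rewrite !inE kk'.
have nz : #|M :\ k|%:R != 0 :> R by rewrite pnatr_eq0 cards_eq0; apply/set0Pn; exists k'.
apply: (mulfI nz); rewrite (reduce k k' a) // (eq_cardsD1 kM k'M) (reduce k' k b) //.
have cardDS (A : {set U}) : S \subset A -> #|A :\: S| = (#|A| - #|S|)%N.
  by move=> SA; rewrite cardsD (setIidPr SA).
rewrite (cardDS _ SMk) (cardDS _ SMk') (eq_cardsD1 kM k'M) [M :\ k' :\ k]setD1C.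
by congr (_ * _); apply: eq_Ep => S' P' /ab.
Qed.

(* For a game living on the fibre of (S, P) over i, the recursion of the
   potential determines w^r_{-i}(S, P): this is the uniqueness half of the theorem. *)
Lemma Ep_fibre_restriction (r : restr_op U R) N w i S P :
  i \in N -> embedded (N :\ i) S P -> S != set0 ->
  (forall S' P', (S' != S) || (restrict_part P' i != P) -> w S' P' = 0) ->
  (forall j, j \in N -> forall S' P', embedded (N :\ j) S' P' ->
      (forall B, B \in P' :|: [set set0] -> w S' (plus_to P' j B) = 0) ->
      r N w j S' P' = 0) ->
  #|N|%:R * Ep p N w = w N set0 + \sum_(j in N) Ep p (N :\ j) (r N w j) ->
  (forall j j', j \in N -> j' \in N -> j != j' -> forall S' P',
      embedded (N :\ j :\ j') S' P' ->
      rp p (N :\ j) (r N w j) j' S' P' = rp p (N :\ j') (r N w j') j S' P') ->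
  #|N|%:R * Ep p N w = #|N :\: S|%:R * (p (N :\ i) (S |: P) * r N w i S P).
Proof.
move=> iN eP Sn0 w0 r0 r_rec r_pi; have /andP[SNi pP] := eP.
have iS : i \notin S by apply/negP => /(subsetP SNi); rewrite !inE eqxx.
have cr j : j \in N -> concentrated (N :\ j) S (r N w j).
  by move=> jN S' P' eP' S'nS; apply: r0 => // B _; apply: w0; rewrite S'nS.
rewrite r_rec (w0 N) ?add0r; last by rewrite (contraNneq _ iS) // => <-.
rewrite (sum_Ep_concentrated cr) -(Ep_point eP Sn0); last first.
  move=> S' P'; have [-> eP' /= P'nP|S'nS eP' _] := eqVneq S' S; last exact: cr.
  apply: r0 => // B BP'; apply: w0; have /andP[_ pP'] := eP'.
  rewrite (restrict_plus_to pP' _ BP') ?P'nP ?orbT //.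
  by rewrite !inE eqxx andbF.
have same l : l \in N :\: S -> Ep p (N :\ l) (r N w l) = Ep p (N :\ i) (r N w i).
  move=> /setDP[lN lS]; have [->//|li] := eqVneq l i.
  apply: (Ep_concentrated_eq lN iN li Sn0 _ (cr l lN) (cr i iN) (r_pi l i lN iN li)).
  apply/subsetP => x xS; have := subsetP SNi x xS; rewrite !inE => /andP[-> ->].
  by rewrite andbT; apply: contraNneq lS => <-.
by rewrite (eq_bigr _ same) sumr_const mulr_natl.
Qed.

End Concentrated.

Section Characterization.
Variables (U : finType) (R : realFieldType) (p : {set U} -> {set {set U}} -> R).
Implicit Types (P : {set {set U}}) (N S : {set U}) (w : tuxgame U R).

Lemma generates_pot_p_set1 :
  generates_pot p -> forall N, N != set0 -> p N [set N] = #|N|%:R^-1.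
Proof.
move=> gp N Nn0; pose v S : R := if S == N then 1 else 0.
have tv : is_tu v by rewrite /is_tu /v eq_sym (negbTE Nn0).
have := gp N v tv; rewrite /Ep /tux_of_tu.
have -> : \sum_(P | partition P N) p N P * \sum_(S in P) v S =
    \sum_(P | partition P N) \sum_(T in P) (if T == N then p N P else 0).
  apply: eq_bigr => P _; rewrite big_distrr /=; apply: eq_bigr => T _.
  by rewrite /v; case: eqP; rewrite ?mulr1 ?mulr0.
rewrite (big_partition_full_block (fun P _ => p N P)) // => ->.
rewrite /Pot (bigD1 N) /=; last by rewrite subxx Nn0.
rewrite big1 ?addr0; last by move=> S /andP[_ SnN]; rewrite /v (negbTE SnN) mulr0.
rewrite /v eqxx mulr1 subnn fact0 muln1.
case e: #|N| => [|n]; first by move: Nn0; rewrite -cards_eq0 e.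
by rewrite factS natrM invfM mulrA /= mulrAC mulfV ?mul1r // pnatr_eq0 -lt0n fact_gt0.
Qed.

Lemma PotrE (r : restr_op U R) N w : N != set0 ->
  Potr r N w = (w N set0 + \sum_(i in N) Potr r (N :\ i) (r N w i)) / #|N|%:R.
Proof.
rewrite -cards_eq0 /Potr; case e: #|N| => [|n] // _.
rewrite /= e; congr ((_ + _) / _); apply: eq_bigr => i iN.
by have := cardsD1 i N; rewrite iN e add1n => -[->].
Qed.

Definition fibre_game w i S P : tuxgame U R :=
  fun S' P' => if (S' == S) && (restrict_part P' i == P) then w S' P' else 0.

Hypothesis p_pos : positive_rp p.
Hypothesis p_set1 : forall N, N != set0 -> p N [set N] = #|N|%:R^-1.

Variable r : restr_op U R.
Hypothesis r_restr : is_restriction r.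
Let r_tux := proj1 r_restr.
Let r_local := proj2 r_restr.

Lemma restr_eq_rp_path_independent : restr_eq r (rp p) -> path_independent r.
Proof.
move=> req N w i j tw iN jN ij S P eP.
have rr k k' : k \in N -> k' \in N :\ k -> embedded (N :\ k :\ k') S P ->
    r (N :\ k) (r N w k) k' S P = rp p (N :\ k) (rp p N w k) k' S P.
  move=> kN k'Nk eQ; rewrite req //; last exact: r_tux.
  by apply: rp_local => B BP; apply: req tw kN _ _ (embedded_plus_to eQ k'Nk BP).
have jNi : j \in N :\ i by rewrite !inE eq_sym ij.
have iNj : i \in N :\ j by rewrite !inE ij.
have eP' : embedded (N :\ j :\ i) S P by rewrite setD1C.
by rewrite (rr i j) // (rr j i) //; apply: rp_path_independent.
Qed.

Lemma restr_eq_rp_preserves_null : restr_eq r (rp p) -> preserves_null r.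
Proof.
by move=> req N i iN S P eP; rewrite req //; apply: rp_vanishes.
Qed.

Lemma restr_eq_rp_Potr : restr_eq r (rp p) ->
  forall N w, is_tux N w -> Potr r N w = Ep p N w.
Proof.
move=> req N; have [n] := ubnP #|N|; elim: n => // n IH in N *; rewrite ltnS => leNn w tw.
have [->|Nn0] := eqVneq N set0.
  rewrite /Potr cards0 /Ep big1 // => P; rewrite partition_set0 => /eqP ->.
  by rewrite big_set0 mulr0.
rewrite PotrE //.
under eq_bigr => j jN do rewrite (IH _ (card_setD1_lt leNn jN) _ (r_tux jN tw))
  (eq_Ep p (req N w j tw jN)).
by rewrite -(Ep_rp_recursion p_pos p_set1 w Nn0) mulrC mulKf // pnatr_eq0 cards_eq0.
Qed.

Section Necessity.
Hypothesis r_path : path_independent r.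
Hypothesis r_null : preserves_null r.
Hypothesis r_Potr : forall N w, is_tux N w -> Potr r N w = Ep p N w.

Lemma restriction_vanishes N w j S P : j \in N -> is_tux N w -> embedded (N :\ j) S P ->
  (forall B, B \in P :|: [set set0] -> w S (plus_to P j B) = 0) -> r N w j S P = 0.
Proof.
by move=> jN tw eP w0; rewrite (r_local (w' := @null_game U R) jN tw _ eP) ?r_null.
Qed.

Lemma Ep_restriction_recursion N w : N != set0 -> is_tux N w ->
  #|N|%:R * Ep p N w = w N set0 + \sum_(j in N) Ep p (N :\ j) (r N w j).
Proof.
move=> Nn0 tw; rewrite -(r_Potr tw) PotrE //.
under eq_bigr => j jN do rewrite (r_Potr (r_tux jN tw)).
by rewrite mulrC divfK // pnatr_eq0 cards_eq0.
Qed.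

Lemma restr_eq_rp_of_Potr : restr_eq r (rp p).
Proof.
move=> N; have [n] := ubnP #|N|; elim: n => // n IH in N *; rewrite ltnS => leNn.
move=> w i tw iN S P eP; have /andP[SNi pP] := eP.
have [S0|Sn0] := eqVneq S set0.
  by subst S; rewrite setD0 in pP; rewrite (r_tux iN tw pP) (rp_is_tux p tw iN pP).
pose v := fibre_game w i S P.
have tv : is_tux N v by move=> Q _; rewrite /v /fibre_game eq_sym (negbTE Sn0).
have wv B : B \in P :|: [set set0] -> w S (plus_to P i B) = v S (plus_to P i B).
  move=> BP; rewrite /v /fibre_game eqxx (restrict_plus_to pP _ BP) ?eqxx //.
  by rewrite !inE eqxx andbF.
rewrite (r_local iN tw tv eP wv) (rp_local _ _ wv).
have v0 S' P' : (S' != S) || (restrict_part P' i != P) -> v S' P' = 0.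
  by rewrite /v /fibre_game -negb_and => /negbTE ->.
have Nn0 : N != set0 by apply/set0Pn; exists i.
have r_eq := Ep_fibre_restriction p_pos p_set1 iN eP Sn0 v0
  (fun j jN S' P' eQ => restriction_vanishes jN tv eQ) (Ep_restriction_recursion Nn0 tv).
have rp_eq := Ep_fibre_restriction (r := rp p) p_pos p_set1 iN eP Sn0 v0
  (fun j jN S' P' eQ => @rp_vanishes _ _ p _ _ _ _ _) (Ep_rp_recursion p_pos p_set1 v Nn0)
  (fun j j' => rp_path_independent p_pos (i := j) (j := j') tv).
have rrp j j' : j \in N -> j' \in N -> j != j' -> forall S' P',
    embedded (N :\ j :\ j') S' P' ->
    rp p (N :\ j) (r N v j) j' S' P' = rp p (N :\ j') (r N v j') j S' P'.
  move=> jN j'N jj' S' P' eQ.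
  have j'Nj : j' \in N :\ j by rewrite !inE eq_sym jj'.
  have jNj' : j \in N :\ j' by rewrite !inE jj'.
  rewrite -(IH _ (card_setD1_lt leNn jN) _ _ (r_tux jN tv) j'Nj _ _ eQ).
  rewrite -(IH _ (card_setD1_lt leNn j'N) _ _ (r_tux j'N tv) jNj'); last by rewrite setD1C.
  exact: r_path.
have iS : i \notin S by apply/negP => /(subsetP SNi); rewrite !inE eqxx.
have nS : #|N :\: S|%:R != 0 :> R.
  by rewrite pnatr_eq0 cards_eq0; apply/set0Pn; exists i; rewrite inE iS.
have pS := p_neq0 p_pos (partition_add_block pP Sn0 SNi).
by apply: (mulfI pS); apply: (mulfI nS); rewrite -r_eq // -rp_eq.
Qed.

End Necessity.

End Characterization.

Theorem theorem4 (U : finType) (R : realFieldType)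
    (p : {set U} -> {set {set U}} -> R) :
  random_partition p -> positive_rp p -> generates_pot p ->
  forall r : restr_op U R, is_restriction r ->
    (path_independent r /\ preserves_null r /\
       (forall (N : {set U}) (w : tuxgame U R), is_tux N w -> Potr r N w = Ep p N w))
    <-> restr_eq r (rp p).
Proof.
move=> _ p_pos gp r r_restr; have p_set1 := generates_pot_p_set1 gp.
split=> [[r_path [r_null r_Potr]]|req].
  exact: (restr_eq_rp_of_Potr p_pos p_set1 r_restr r_path r_null r_Potr).
split; first exact: (restr_eq_rp_path_independent p_pos r_restr req).
split; first exact: (restr_eq_rp_preserves_null req).
exact: (restr_eq_rp_Potr p_pos p_set1 r_restr req).
Qed.
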